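(* Suppose $\Psi(t)=1-t$, and let $c\colon\mathcal{X}\times\mathcal{Y}\to[0,1]$ be any cost function. Let $\mathcal{H}_{\mathrm{all}}$ be the family of all measurable functions $\mathcal{X}\times\overline{\mathcal{Y}}\to\mathbb{R}$. Then for all $h\in\mathcal{H}_{\mathrm{all}}$ and any distribution on $\mathcal{X}\times\mathcal{Y}$, $$\mathcal{E}_{\mathsf{L}_{\mathrm{def}}}(h)-\mathcal{E}^*_{\mathsf{L}_{\mathrm{def}}}(\mathcal{H}_{\mathrm{all}})\le(n+1)\big(\mathcal{E}_{\mathsf{L}_{\mathrm{RL2D}}}(h)-\mathcal{E}^*_{\mathsf{L}_{\mathrm{RL2D}}}(\mathcal{H}_{\mathrm{all}})\big).$$ Furthermore, $\mathsf{L}_{\mathrm{RL2D}}$ is Bayes-consistent with respect to $\mathsf{L}_{\mathrm{def}}$: for any distribution and any sequence $(h_k)$ in $\mathcal{H}_{\mathrm{all}}$, $\mathcal{E}_{\mathsf{L}_{\mathrm{RL2D}}}(h_k)-\mathcal{E}^*_{\mathsf{L}_{\mathrm{RL2D}}}(\mathcal{H}_{\mathrm{all}})\to0$ implies $\mathcal{E}_{\mathsf{L}_{\mathrm{def}}}(h_k)-\mathcal{E}^*_{\mathsf{L}_{\mathrm{def}}}(\mathcal{H}_{\mathrm{all}})\to0$.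
   Context: Learning to defer. $\mathcal{X}$ is an input space, $\mathcal{Y}=[n]$, $\overline{\mathcal{Y}}=\{1,\dots,n+1\}$ with $n+1$ meaning ''defer''. For $h\colon\mathcal{X}\times\overline{\mathcal{Y}}\to\mathbb{R}$, $\mathsf{h}(x)=\operatorname{argmax}_{y\in\overline{\mathcal{Y}}}h(x,y)$ with a fixed deterministic tie-breaking rule. Given a cost $c\colon\mathcal{X}\times\mathcal{Y}\to[0,1]$, the deferral loss is $\mathsf{L}_{\mathrm{def}}(h,x,y)=1_{\mathsf{h}(x)\neq y}1_{\mathsf{h}(x)\in[n]}+c(x,y)1_{\mathsf{h}(x)=n+1}$, and for non-increasing $\Psi$ the surrogate is $\mathsf{L}_{\mathrm{RL2D}}(h,x,y)=c(x,y)\Psi\big(\frac{e^{h(x,y)}}{\sum_{y'\in\overline{\mathcal{Y}}}e^{h(x,y')}}\big)+(1-c(x,y))\Psi\big(\frac{e^{h(x,y)}+e^{h(x,n+1)}}{\sum_{y'\in\overline{\mathcal{Y}}}e^{h(x,y')}}\big)$. $\mathcal{E}_{\mathsf{L}}(h)=\mathbb{E}_{(x,y)}[\mathsf{L}(h,x,y)]$ and $\mathcal{E}^*_{\mathsf{L}}(\mathcal{H})=\inf_{h\in\mathcal{H}}\mathcal{E}_{\mathsf{L}}(h)$. *)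

From HB Require Import structures.
From mathcomp Require Import all_boot all_order all_algebra.
From mathcomp Require Import all_classical all_reals all_analysis.
Set Implicit Arguments. Unset Strict Implicit. Unset Printing Implicit Defensive.
Import Order.TTheory GRing.Theory Num.Theory.
Local Open Scope ring_scope.
Local Open Scope classical_set_scope.

HB.instance Definition _ (m : nat) := isPointed.Build 'I_m.+1 ord0.

HB.instance Definition _ (m : nat) := @isMeasurable.Build default_measure_display
  'I_m.+1 discrete_measurable discrete_measurable0
  discrete_measurableC discrete_measurableU.

Local Open Scope ereal_scope.

Section L2D.
Context {d : measure_display} {X : measurableType d} {R : realType} (n : nat).
(* Labels Y = [n+1] are 'I_n.+1, the augmented label set Ybar = 'I_n.+2,
   whose last element ord_max plays the role of "defer". *)

Definition lab (y : 'I_n.+1) : 'I_n.+2 := widen_ord (leqnSn n.+1) y.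
Definition defer : 'I_n.+2 := ord_max.

Definition hpred (h : X -> 'I_n.+2 -> R) (x : X) : 'I_n.+2 :=
  [arg max_(i > ord0) h x i]%O.

Definition L_def (c : X -> 'I_n.+1 -> R) (h : X -> 'I_n.+2 -> R)
    (x : X) (y : 'I_n.+1) : R :=
  ((hpred h x != lab y)%:R * (hpred h x != defer)%:R
   + c x y * (hpred h x == defer)%:R)%R.

Definition L_RL2D (Psi : R -> R) (c : X -> 'I_n.+1 -> R)
    (h : X -> 'I_n.+2 -> R) (x : X) (y : 'I_n.+1) : R :=
  let Z := (\sum_(j < n.+2) expR (h x j))%R in
  (c x y * Psi (expR (h x (lab y)) / Z)
   + (1 - c x y) * Psi ((expR (h x (lab y)) + expR (h x defer)) / Z))%R.

Definition H_all : set (X -> 'I_n.+2 -> R) :=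
  [set h | measurable_fun setT (fun z : X * 'I_n.+2 => h z.1 z.2)].

Definition risk (P : probability (X * 'I_n.+1)%type R)
    (L : (X -> 'I_n.+2 -> R) -> X -> 'I_n.+1 -> R)
    (h : X -> 'I_n.+2 -> R) : \bar R :=
  \int[P]_z (L h z.1 z.2)%:E.

Definition best_risk (P : probability (X * 'I_n.+1)%type R)
    (L : (X -> 'I_n.+2 -> R) -> X -> 'I_n.+1 -> R) : \bar R :=
  ereal_inf [set risk P L h | h in H_all].

End L2D.

(* With [Psi t = 1 - t] the surrogate loss of [h] at [(x, y)] is the expected
   deferral loss of an action drawn from the softmax distribution [p] of the
   scores [h x], so E_RL2D(h) = E[sum_j p_j l_j] where [l_j] is the loss of
   action [j].  Softmax of sharply scaled one-hot scores approximates any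
   measurable deterministic rule, whence E*_RL2D <= E*_def.  Conversely every
   measurable randomized rule [r] is matched up to [eps] by a measurable
   deterministic one (threshold the weights of two actions on a fine grid and
   keep the best threshold, then merge the two actions and induct), whence
   E*_def <= E[sum_j r_j l_j].  If [k] is the predicted label then
   [p_k >= 1/(n+2)], so [r = ((n+2) p - delta_k) / (n+1)] is a randomized
   rule; it yields (n+1) E*_def <= (n+2) E_RL2D(h) - E_def(h), which rearranges
   to the excess-risk bound. *)

From HB Require Import structures.
From mathcomp Require Import all_boot all_order all_algebra.
From mathcomp Require Import all_classical all_reals all_analysis.
From mathcomp Require Import measurable_realfun.
From mathcomp Require Import ring lra zify.
Import Order.TTheory GRing.Theory Num.Theory.
Local Open Scope ring_scope.
Local Open Scope classical_set_scope.

Lemma ler_psum_term (R : numDomainType) (I : finType) (F : I -> R) (j : I) :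
  (forall i, 0 <= F i) -> F j <= \sum_i F i.
Proof. by move=> F0; rewrite (bigD1 j) //= lerDl sumr_ge0. Qed.

Lemma sum_mul_eq {R : pzSemiRingType} {I : finType} (F : I -> R) (a : I) :
  \sum_j F j * (j == a)%:R = F a.
Proof.
by rewrite (bigD1 a) //= eqxx mulr1 big1 ?addr0 // => j /negbTE ->; rewrite mulr0.
Qed.

Lemma exists_le_mean {R : realFieldType} {N : nat} (F : 'I_N.+1 -> R) :
  exists i, F i * N.+1%:R <= \sum_j F j.
Proof.
have [i _ Fi_min] := @arg_minP _ _ _ ord0 xpredT F isT.
exists i; rewrite mulr_natr -[X in _ *+ X]card_ord -sumr_const.
by apply: ler_sum => j _; exact: Fi_min.
Qed.

Lemma mixture_le_term {R : realDomainType} {I : finType} (p l : I -> R) (k : I) :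
  (forall j, 0 <= p j) -> \sum_j p j = 1 -> (forall j, 0 <= l j <= 1) ->
  \sum_j p j * l j <= l k + (1 - p k).
Proof.
move=> p0 p1 l01; rewrite (bigD1 k) //=.
have rest : \sum_(j | j != k) p j * l j <= 1 - p k.
  apply: (@le_trans _ _ (\sum_(j | j != k) p j)).
    by apply: ler_sum => j _; rewrite ler_piMr ?p0 //; case/andP: (l01 j).
  by move: p1; rewrite (bigD1 k) //=; lra.
have : p k * l k <= l k.
  by rewrite ler_piMl -?p1 ?ler_psum_term //; case/andP: (l01 k).
lra.
Qed.

Definition merge_last {A : Type} {K : nat} (F : 'I_K.+2 -> A) (a : A)
    (j : 'I_K.+1) : A :=
  if j == ord_max then a else F (widen_ord (leqnSn _) j).

Definition unmerge_last {K : nat} (b : bool) (j : 'I_K.+1) : 'I_K.+2 :=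
  if b || (j != ord_max) then widen_ord (leqnSn _) j else ord_max.

Lemma merge_last_unmerge {A : Type} {K : nat} (F : 'I_K.+2 -> A) b j :
  F (unmerge_last b j)
  = merge_last F (if b then F (widen_ord (leqnSn _) ord_max) else F ord_max) j.
Proof. by rewrite /unmerge_last /merge_last; case: eqP => [->|_]; case: b. Qed.

Lemma merge_lastP {A : Type} {K : nat} (Q : A -> Prop) (F : 'I_K.+2 -> A) a j :
  (forall i, Q (F i)) -> Q a -> Q (merge_last F a j).
Proof. by move=> QF Qa; rewrite /merge_last; case: ifP. Qed.

Lemma big_merge_last {R : comRingType} {K : nat} (F : 'I_K.+2 -> R) (a : R) :
  \sum_j merge_last F a j
  = \sum_j F j - F (widen_ord (leqnSn _) ord_max) - F ord_max + a.
Proof.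
rewrite big_ord_recr /= /merge_last eqxx (big_ord_recr K.+1) big_ord_recr /=.
rewrite (eq_bigr (fun j => F (widen_ord (leqnSn _) (widen_ord (leqnSn K) j)))).
  by ring.
by move=> j _; rewrite ifN // -val_eqE /= neq_ltn ltn_ord.
Qed.

Lemma sum_le_truncn (R : archiRealFieldType) (N : nat) (a : R) : 0 <= a ->
  \sum_(i < N) (i.+1%:R <= a)%R%:R = (minn (Num.truncn a) N)%:R :> R.
Proof.
move=> a0; rewrite (eq_bigr (fun i : 'I_N => (i < Num.truncn a)%N%:R)); last first.
  by move=> i _; rewrite truncn_gt_nat.
elim: N => [|N IH]; first by rewrite big_ord0 minn0.
rewrite big_ord_recr /= IH -natrD; congr (_%:R).
by case: ltnP => /= ?; lia.
Qed.

Lemma threshold_sum_le (R : realType) (N : nat) (u v a1 a2 : R) :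
  0 <= u -> 0 <= v -> u + v <= 1 -> 0 <= a1 <= 1 -> 0 <= a2 <= 1 ->
  \sum_(i < N) (u + v) * (if i.+1%:R * (u + v) <= N%:R * u then a1 else a2)
    <= N%:R * (u * a1 + v * a2) + 1.
Proof.
move=> u0 v0 s1 /andP[a10 a11] /andP[a20 a21].
have [s0|s_neq0] := eqVneq (u + v) 0.
  rewrite s0 big1 => [|i _]; last by rewrite mul0r.
  have [-> ->] : u = 0 /\ v = 0 by split; lra.
  by rewrite !mul0r addr0 mulr0 add0r.
set s := u + v in s1 s_neq0 *.
have s_gt0 : 0 < s by rewrite lt_neqAle eq_sym s_neq0 addr_ge0.
pose t := N%:R * u / s.
have st : s * t = N%:R * u by rewrite mulrC divfK.
have thr i : (i.+1%:R * s <= N%:R * u) = (i.+1%:R <= t) by rewrite ler_pdivlMr.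
have t0 : 0 <= t by rewrite divr_ge0 // ?mulr_ge0 // ltW.
have tN : t < N.+1%:R.
  have N0 : 0 <= N%:R :> R := ler0n _ _.
  have us : u <= s by rewrite /s lerDl.
  rewrite ltr_pdivrMr // -natr1 mulrDl mul1r; nra.
set m : R := (Num.truncn t)%:R.
have /andP[mt tm] := truncn_itv t0; rewrite -natr1 -/m in tm.
have count : \sum_(i < N) (i.+1%:R <= t)%R%:R = m :> R.
  by rewrite sum_le_truncn //; congr _%:R; apply/minn_idPl; rewrite truncn_le_nat.
have -> : \sum_(i < N) s * (if i.+1%:R * s <= N%:R * u then a1 else a2)
          = s * (m * a1 + (N%:R - m) * a2).
  rewrite -mulr_sumr; congr (s * _).
  rewrite (eq_bigr (fun i : 'I_N => (i.+1%:R <= t)%R%:R * a1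
                                    + (1 - (i.+1%:R <= t)%R%:R) * a2)).
    by rewrite big_split /= -!mulr_suml sumrB sumr_const card_ord count.
  by move=> i _; rewrite thr; case: ifP => _ /=; ring.
have -> : N%:R * (u * a1 + v * a2) = s * t * a1 + (N%:R * s - s * t) * a2.
  by rewrite st /s; ring.
(* the rounding error [s * (t - m)] lies in [0, s] *)
have err : 0 <= s * (t - m) <= 1 by apply/andP; split; nra.
nra.
Qed.

Section bounded_measurable.
Context {d : measure_display} {T : measurableType d} {R : realType}
  (P : probability T R).
Implicit Types f g : T -> R.

Definition bounded_measurable (f : T -> R) :=
  measurable_fun setT f /\ exists M : R, forall z, `|f z| <= M.

Lemma bounded_measurable_integrable f :
  bounded_measurable f -> P.-integrable setT (EFin \o f).
Proof.
move=> [mf [M fM]]; apply: measurable_bounded_integrable => //.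
  by apply: le_lt_trans (probability_le1 P measurableT) _; rewrite ltry.
exists M; split; first by rewrite num_real.
by move=> y My x _; exact: le_trans (fM x) (ltW My).
Qed.

Lemma integral_bounded_EFin f : bounded_measurable f ->
  (\int[P]_z (f z)%:E)%E = (\int[P]_z f z)%:E.
Proof.
move=> bf; rewrite /Rintegral fineK //.
by apply: integrable_fin_num => //; exact: bounded_measurable_integrable.
Qed.

Lemma bounded_measurable_cst (a : R) : bounded_measurable (fun _ => a).
Proof. by split; [exact: measurable_cst | exists `|a|]. Qed.

Lemma bounded_measurable01 f : measurable_fun setT f ->
  (forall z, 0 <= f z <= 1) -> bounded_measurable f.
Proof.
move=> mf f01; split => //; exists 1 => z.
by have /andP[f0 f1] := f01 z; rewrite ger0_norm.
Qed.

Lemma bounded_measurableD f g : bounded_measurable f -> bounded_measurable g ->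
  bounded_measurable (fun z => f z + g z).
Proof.
move=> [mf [M fM]] [mg [N gN]]; split; first exact: measurable_funD.
by exists (M + N) => z; apply: le_trans (ler_normD _ _) _; exact: lerD.
Qed.

Lemma bounded_measurableM f g : bounded_measurable f -> bounded_measurable g ->
  bounded_measurable (fun z => f z * g z).
Proof.
move=> [mf [M fM]] [mg [N gN]]; split; first exact: measurable_funM.
by exists (M * N) => z; rewrite normrM; exact: ler_pM.
Qed.

Lemma bounded_measurable_sum (I : Type) (r : seq I) (F : I -> T -> R) :
  (forall i, bounded_measurable (F i)) ->
  bounded_measurable (fun z => \sum_(i <- r) F i z).
Proof.
move=> bF; elim: r => [|i r IH].
  by under eq_fun do rewrite big_nil; exact: bounded_measurable_cst.
by under eq_fun do rewrite big_cons; exact: bounded_measurableD.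
Qed.

Lemma Rintegral_prob_cst (a : R) : \int[P]_z a = a.
Proof.
rewrite Rintegral_cst // (_ : fine _ = 1) ?mulr1 //.
exact: (congr1 fine (probability_setT P)).
Qed.

Lemma RintegralD_bounded f g : bounded_measurable f -> bounded_measurable g ->
  \int[P]_z (f z + g z) = \int[P]_z f z + \int[P]_z g z.
Proof.
by move=> bf bg; apply: RintegralD => //; exact: bounded_measurable_integrable.
Qed.

Lemma RintegralZl_bounded a f : bounded_measurable f ->
  \int[P]_z (a * f z) = a * \int[P]_z f z.
Proof.
by move=> bf; apply: RintegralZl => //; exact: bounded_measurable_integrable.
Qed.

Lemma le_Rintegral_bounded f g : bounded_measurable f -> bounded_measurable g ->
  (forall z, f z <= g z) -> \int[P]_z f z <= \int[P]_z g z.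
Proof.
by move=> bf bg fg; apply: le_Rintegral => //; exact: bounded_measurable_integrable.
Qed.

Lemma Rintegral_sum_bounded (I : Type) (r : seq I) (F : I -> T -> R) :
  (forall i, bounded_measurable (F i)) ->
  \int[P]_z (\sum_(i <- r) F i z) = \sum_(i <- r) \int[P]_z F i z.
Proof.
move=> bF; elim: r => [|i r IH].
  by under eq_Rintegral do rewrite big_nil; rewrite big_nil Rintegral_prob_cst.
under eq_Rintegral do rewrite big_cons.
by rewrite big_cons RintegralD_bounded ?IH //; exact: bounded_measurable_sum.
Qed.

End bounded_measurable.

Lemma measurable_fun_ord {m} {d' : measure_display} {T' : measurableType d'}
  (f : 'I_m.+1 -> T') : measurable_fun setT f.
Proof. by move=> _ B _. Qed.

Lemma measurable_merge_last {d'} {T : measurableType d'} {R : realType} {K : nat}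
    (F : 'I_K.+2 -> T -> R) (f : T -> R) :
  (forall i, measurable_fun setT (F i)) -> measurable_fun setT f ->
  forall j, measurable_fun setT (fun t => merge_last (F ^~ t) (f t) j).
Proof. by move=> mF mf j; rewrite /merge_last; case: (j == ord_max). Qed.

Lemma measurable_fun_select {d1 d2} {X : measurableType d1} {Y : measurableType d2}
    {R : realType} {m : nat} (F : 'I_m.+1 -> X * Y -> R) (g : X -> 'I_m.+1) :
  (forall j, measurable_fun setT (F j)) -> measurable_fun setT g ->
  measurable_fun setT (fun z => F (g z.1) z).
Proof.
move=> mF mg; have -> : (fun z => F (g z.1) z) = fun z => \sum_j F j z * (j == g z.1)%:R.
  by apply: funext => z; rewrite sum_mul_eq.
apply: measurable_sum => j; apply: measurable_funM => //.
exact: measurableT_comp (measurable_fun_ord (fun i => (j == i)%:R : R))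
  (measurableT_comp mg measurable_fst).
Qed.

Lemma measurable_fun_factor {d1 d2} {T : measurableType d1} {U : measurableType d2}
    (I : finType) (b : I -> T -> bool) (f : T -> U) :
  (forall i, measurable_fun setT (b i)) ->
  (forall x x', (forall i, b i x = b i x') -> f x = f x') ->
  measurable_fun setT f.
Proof.
move=> mb fb _ A _; rewrite setTI.
pose pat x : {ffun I -> bool} := [ffun i => b i x].
pose S p := \bigcap_(i in [set: I]) (b i @^-1` [set p i]).
have -> : f @^-1` A = \bigcup_(p in [set pat x | x in f @^-1` A]) S p.
  apply/seteqP; split => [x Ax|x [_ [x' Ax' <-] Sx]].
    by exists (pat x); [exists x | move=> i _; rewrite /= ffunE].
  by rewrite /= (fb x x') // => i; have := Sx i Logic.I; rewrite /= ffunE.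
apply: fin_bigcup_measurable => [|p _]; first exact: finite_finset.
apply: fin_bigcap_measurable => [|i _]; first exact: finite_finset.
by rewrite -[_ @^-1` _]setTI; exact: mb.
Qed.

Section derandomization.
Context {d1 d2 : measure_display} {X : measurableType d1}
  {Y : measurableType d2} {R : realType} (P : probability (X * Y)%type R).

Lemma bounded_measurable_if (b : X -> bool) (f1 f2 : X * Y -> R) :
  measurable_fun setT b -> bounded_measurable f1 -> bounded_measurable f2 ->
  bounded_measurable (fun z => if b z.1 then f1 z else f2 z).
Proof.
move=> mb [mf1 [M1 f1M]] [mf2 [M2 f2M]]; split.
  by apply: measurable_fun_ifT => //; exact: measurableT_comp mb measurable_fst.
by exists (Num.max M1 M2) => z; case: (b z.1); rewrite le_max ?f1M ?f2M ?orbT.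
Qed.

Lemma bounded_measurable_fst01 (w : X -> R) : measurable_fun setT w ->
  (forall x, 0 <= w x <= 1) -> bounded_measurable (fun z : X * Y => w z.1).
Proof.
by move=> mw w01; apply: bounded_measurable01 => [|z //];
  exact: measurableT_comp mw measurable_fst.
Qed.

Lemma bounded_measurable_mixture {I : finType} {r : I -> X -> R}
    {l : I -> X * Y -> R} :
  (forall j, measurable_fun setT (r j)) -> (forall j x, 0 <= r j x) ->
  (forall x, \sum_j r j x = 1) ->
  (forall j, measurable_fun setT (l j)) -> (forall j z, 0 <= l j z <= 1) ->
  bounded_measurable (fun z => \sum_j r j z.1 * l j z).
Proof.
move=> mr r0 r1 ml l01; apply: bounded_measurable01 => [|z].
  apply: measurable_sum => j; apply: measurable_funM => //.
  exact: measurableT_comp (mr j) measurable_fst.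
rewrite sumr_ge0 => [|j _]; last by rewrite mulr_ge0 ?r0 //; case/andP: (l01 j z).
rewrite -(r1 z.1) ler_sum // => j _.
by rewrite ler_piMr ?r0 //; case/andP: (l01 j z).
Qed.

Lemma derandomize_pair (u v : X -> R) (f1 f2 : X * Y -> R) (eps : R) :
  measurable_fun setT u -> measurable_fun setT v ->
  (forall x, [/\ 0 <= u x, 0 <= v x & u x + v x <= 1]) ->
  measurable_fun setT f1 -> measurable_fun setT f2 ->
  (forall z, 0 <= f1 z <= 1) -> (forall z, 0 <= f2 z <= 1) -> 0 < eps ->
  exists2 b : X -> bool, measurable_fun setT b &
    \int[P]_z ((u z.1 + v z.1) * (if b z.1 then f1 z else f2 z))
      <= \int[P]_z (u z.1 * f1 z + v z.1 * f2 z) + eps.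
Proof.
move=> mu mv uv mf1 mf2 f1_01 f2_01 eps_gt0.
pose N := Num.truncn eps^-1.
have N_gt0 : 0 < N.+1%:R :> R := ltr0Sn _ _.
have epsN : 1 <= eps * N.+1%:R.
  have := truncnS_gt eps^-1; rewrite -/N => invN.
  by rewrite -ler_pdivrMl // mulr1 ltW.
pose b (i : 'I_N.+1) x := i.+1%:R * (u x + v x) <= N.+1%:R * u x.
have mb i : measurable_fun setT (b i).
  by apply: measurable_fun_ler; apply: measurable_funM => //; exact: measurable_funD.
have bu : bounded_measurable (fun z : X * Y => u z.1).
  by apply: bounded_measurable_fst01 => // x; have [] := uv x; lra.
have bv : bounded_measurable (fun z : X * Y => v z.1).
  by apply: bounded_measurable_fst01 => // x; have [] := uv x; lra.
have bf1 := bounded_measurable01 _ mf1 f1_01.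
have bf2 := bounded_measurable01 _ mf2 f2_01.
have bsel i : bounded_measurable
    (fun z => (u z.1 + v z.1) * (if b i z.1 then f1 z else f2 z)).
  by apply: bounded_measurableM;
    [exact: bounded_measurableD|exact: bounded_measurable_if].
have bmix : bounded_measurable (fun z => u z.1 * f1 z + v z.1 * f2 z).
  by apply: bounded_measurableD; exact: bounded_measurableM.
pose F i := \int[P]_z ((u z.1 + v z.1) * (if b i z.1 then f1 z else f2 z)).
have [i0 Fi0] := exists_le_mean F.
exists (b i0) => //.
rewrite -(ler_pM2r N_gt0); apply: le_trans Fi0 _.
rewrite /F -Rintegral_sum_bounded //.
apply: (@le_trans _ _ (\int[P]_z (N.+1%:R * (u z.1 * f1 z + v z.1 * f2 z) + 1))).
  apply: le_Rintegral_bounded => [||z].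
  - exact: bounded_measurable_sum.
  - apply: bounded_measurableD; last exact: bounded_measurable_cst.
    exact: bounded_measurableM (bounded_measurable_cst _) bmix.
  - have [u0 v0 uv1] := uv z.1; exact: threshold_sum_le.
rewrite RintegralD_bounded ?RintegralZl_bounded ?Rintegral_prob_cst //; last first.
  - exact: bounded_measurable_cst.
  - exact: bounded_measurableM (bounded_measurable_cst _) bmix.
nra.
Qed.

Lemma merge_last_mixture {K : nat} (l : 'I_K.+2 -> X * Y -> R)
    (r : 'I_K.+2 -> X -> R) (f : X * Y -> R) :
  (forall j, measurable_fun setT (l j)) -> (forall j z, 0 <= l j z <= 1) ->
  (forall j, measurable_fun setT (r j)) -> (forall j x, 0 <= r j x) ->
  (forall x, \sum_j r j x = 1) ->
  measurable_fun setT f -> (forall z, 0 <= f z <= 1) ->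
  let r' j x :=
    merge_last (r ^~ x) (r (widen_ord (leqnSn _) ord_max) x + r ord_max x) j in
  let l' j z := merge_last (l ^~ z) (f z) j in
  [/\ forall j, measurable_fun setT (l' j), forall j z, 0 <= l' j z <= 1,
      forall j, measurable_fun setT (r' j), forall j x, 0 <= r' j x
    & forall x, \sum_j r' j x = 1].
Proof.
move=> ml l01 mr r0 r1 mf f01 r' l'; split.
- exact: measurable_merge_last.
- by move=> j z; apply: (merge_lastP (fun a => 0 <= a <= 1)).
- by apply: measurable_merge_last => //; apply: measurable_funD; exact: mr.
- by move=> j x; apply: (merge_lastP (fun a => 0 <= a)) => //; rewrite addr_ge0.
- by move=> x; rewrite big_merge_last r1; ring.
Qed.

Lemma derandomize_last_pair (K : nat) (l : 'I_K.+2 -> X * Y -> R)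
    (r : 'I_K.+2 -> X -> R) (eps : R) :
  (forall j, measurable_fun setT (l j)) -> (forall j z, 0 <= l j z <= 1) ->
  (forall j, measurable_fun setT (r j)) -> (forall j x, 0 <= r j x) ->
  (forall x, \sum_j r j x = 1) -> 0 < eps ->
  let u x := r (widen_ord (leqnSn _) ord_max) x in let v x := r ord_max x in
  exists2 b : X -> bool, measurable_fun setT b &
    \int[P]_z (\sum_j merge_last (r ^~ z.1) (u z.1 + v z.1) j *
      merge_last (l ^~ z)
        (if b z.1 then l (widen_ord (leqnSn _) ord_max) z else l ord_max z) j)
    <= \int[P]_z (\sum_j r j z.1 * l j z) + eps.
Proof.
move=> ml l01 mr r0 r1 eps_gt0 u v.
pose wd := widen_ord (leqnSn K.+1).
have uv x : [/\ 0 <= u x, 0 <= v x & u x + v x <= 1].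
  have := big_merge_last (r ^~ x) 0; rewrite r1 addr0 => rest.
  have : 0 <= \sum_j merge_last (r ^~ x) 0 j.
    by apply: sumr_ge0 => j _; rewrite /merge_last; case: ifP.
  by rewrite rest /u /v; split; rewrite ?r0 //; lra.
have [b mb Hb] := derandomize_pair u v (l (wd ord_max)) (l ord_max) eps
  (mr _) (mr _) uv (ml _) (ml _) (l01 _) (l01 _) eps_gt0.
exists b => //.
pose sel z := if b z.1 then l (wd ord_max) z else l ord_max z.
have merge z : \sum_j merge_last (r ^~ z.1) (u z.1 + v z.1) j
                 * merge_last (l ^~ z) (sel z) j
    + (u z.1 * l (wd ord_max) z + v z.1 * l ord_max z)
    = \sum_j r j z.1 * l j z + (u z.1 + v z.1) * sel z.
  rewrite (eq_bigr (merge_last (fun j => r j z.1 * l j z) ((u z.1 + v z.1) * sel z)));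
    last by move=> j _; rewrite /merge_last; case: ifP.
  by rewrite big_merge_last /u /v /=; ring.
have bu : bounded_measurable (fun z : X * Y => u z.1).
  by apply: (@bounded_measurable_fst01 u) => [|x]; [exact: mr|have [] := uv x; lra].
have bv : bounded_measurable (fun z : X * Y => v z.1).
  by apply: (@bounded_measurable_fst01 v) => [|x]; [exact: mr|have [] := uv x; lra].
have bl j : bounded_measurable (l j) := bounded_measurable01 _ (ml j) (l01 j).
have msel : measurable_fun setT sel.
  by apply: measurable_fun_ifT => //; exact: measurableT_comp mb measurable_fst.
have sel01 z : 0 <= sel z <= 1 by rewrite /sel; case: ifP.
have /= [ml' l'01 mr' r'0 r'1] := merge_last_mixture _ _ _ ml l01 mr r0 r1 msel sel01.
have bmerged := bounded_measurable_mixture mr' r'0 r'1 ml' l'01.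
have int_merge : \int[P]_z (\sum_j merge_last (r ^~ z.1) (u z.1 + v z.1) j
                                 * merge_last (l ^~ z) (sel z) j)
    + \int[P]_z (u z.1 * l (wd ord_max) z + v z.1 * l ord_max z)
    = \int[P]_z (\sum_j r j z.1 * l j z) + \int[P]_z ((u z.1 + v z.1) * sel z).
  rewrite -!RintegralD_bounded //.
  - by apply: eq_Rintegral => z _; exact: merge.
  - exact: bounded_measurable_mixture.
  - by apply: bounded_measurableM;
      [exact: bounded_measurableD|exact: bounded_measurable_if].
  - by apply: bounded_measurableD; exact: bounded_measurableM.
lra.
Qed.

Lemma derandomize (K : nat) (l : 'I_K.+1 -> X * Y -> R) (r : 'I_K.+1 -> X -> R)
    (eps : R) :
  (forall j, measurable_fun setT (l j)) -> (forall j z, 0 <= l j z <= 1) ->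
  (forall j, measurable_fun setT (r j)) -> (forall j x, 0 <= r j x) ->
  (forall x, \sum_j r j x = 1) -> 0 < eps ->
  exists2 g : X -> 'I_K.+1, measurable_fun setT g &
    \int[P]_z l (g z.1) z <= \int[P]_z (\sum_j r j z.1 * l j z) + eps.
Proof.
elim: K l r eps => [|K IH] l r eps ml l01 mr r0 r1 eps_gt0.
  exists (fun _ => ord0); first exact: measurable_cst.
  have -> : \int[P]_z (\sum_j r j z.1 * l j z) = \int[P]_z l ord0 z.
    apply: eq_Rintegral => z _; rewrite big_ord1.
    by have := r1 z.1; rewrite big_ord1 => ->; rewrite mul1r.
  by rewrite lerDl ltW.
have eps2_gt0 : 0 < eps / 2 by rewrite divr_gt0.
have /= [b mb merge_le] := derandomize_last_pair _ _ _ _ ml l01 mr r0 r1 eps2_gt0.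
pose wd := widen_ord (leqnSn K.+1).
pose sel z := if b z.1 then l (wd ord_max) z else l ord_max z.
have msel : measurable_fun setT sel.
  by apply: measurable_fun_ifT => //; exact: measurableT_comp mb measurable_fst.
have sel01 z : 0 <= sel z <= 1 by rewrite /sel; case: ifP.
have /= [ml' l'01 mr' r'0 r'1] := merge_last_mixture _ _ _ ml l01 mr r0 r1 msel sel01.
have [g' mg' g'_le] := IH _ _ (eps / 2) ml' l'01 mr' r'0 r'1 eps2_gt0.
exists (fun x => unmerge_last (b x) (g' x)).
  have -> : (fun x => unmerge_last (b x) (g' x))
      = fun x => if b x then wd (g' x) else unmerge_last false (g' x).
    by apply: funext => x; case: (b x).
  apply: measurable_fun_ifT => //; apply: measurableT_comp mg'; exact: measurable_fun_ord.
under eq_Rintegral => z _ do rewrite (merge_last_unmerge (l ^~ z)).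
apply: le_trans g'_le _; apply: le_trans (lerD merge_le (lexx (eps / 2))) _.
by rewrite -addrA -splitr.
Qed.

End derandomization.

Lemma arg_max_eq_cmp (R : realDomainType) m (F G : 'I_m.+1 -> R) :
  (forall i k, (F i <= F k) = (G i <= G k)) ->
  [arg max_(i > ord0) F i]%O = [arg max_(i > ord0) G i]%O.
Proof.
move=> FG; rewrite /Order.arg_max /extremum; congr odflt; apply: eq_pick => i /=.
by apply: eq_forallb => j; rewrite FG.
Qed.

Lemma measurable_hpred {d} {X : measurableType d} {R : realType} {n}
    (h : X -> 'I_n.+2 -> R) :
  (forall j, measurable_fun setT (h ^~ j)) -> measurable_fun setT (hpred h).
Proof.
move=> mh; apply: (@measurable_fun_factor _ _ _ _ _
  (fun p : 'I_n.+2 * 'I_n.+2 => fun x => h x p.1 <= h x p.2)).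
  by move=> p; exact: measurable_fun_ler.
by move=> x x' hxx'; apply: arg_max_eq_cmp => i k; exact: (hxx' (i, k)).
Qed.

Lemma hpred_ge {d} {X : measurableType d} {R : realType} {n}
    (h : X -> 'I_n.+2 -> R) x j : h x j <= h x (hpred h x).
Proof. by rewrite /hpred; case: arg_maxP => //= i _; exact. Qed.

Lemma lab_neq_defer {n : nat} (y : 'I_n.+1) : lab y != defer n.
Proof. by rewrite -val_eqE /= neq_ltn ltn_ord. Qed.

Section softmax.
Context {R : realType} {I : finType}.
Implicit Types s : I -> R.

Definition softmax s (j : I) : R := expR (s j) / \sum_k expR (s k).

Lemma sum_expR_gt0 s (k : I) : 0 < \sum_j expR (s j).
Proof.
by apply: lt_le_trans (expR_gt0 (s k)) _; apply: ler_psum_term => j; exact: expR_ge0.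
Qed.

Lemma softmax_ge0 s j : 0 <= softmax s j.
Proof. by rewrite divr_ge0 ?expR_ge0 // ltW // (sum_expR_gt0 _ j). Qed.

Lemma sum_softmax s (k : I) : \sum_j softmax s j = 1.
Proof. by rewrite -mulr_suml mulfV // gt_eqF // (sum_expR_gt0 _ k). Qed.

Lemma softmax_logsumexp s j : softmax s j = expR (s j - ln (\sum_k expR (s k))).
Proof. by rewrite expRD expRN lnK // posrE (sum_expR_gt0 _ j). Qed.

Lemma softmax_arg_max s k : (forall j, s j <= s k) -> 1 <= #|I|%:R * softmax s k.
Proof.
move=> sk; rewrite -[leLHS](sum_softmax s k) mulr_natl -sumr_const.
apply: ler_sum => j _; rewrite /softmax ler_wpM2r ?ler_expR //.
by rewrite invr_ge0 ltW // (sum_expR_gt0 _ k).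
Qed.

Lemma softmax_scaled_onehot (k : I) (M : R) : 0 < M ->
  softmax (fun j => (j == k)%:R * ln M) k = M / (M + (#|I|.-1)%:R).
Proof.
move=> M_gt0; rewrite /softmax (bigD1 k) //= eqxx mul1r lnK ?posrE //.
congr (_ / (_ + _)); rewrite (eq_bigr (fun _ => 1)) => [|j /negbTE ->]; last first.
  by rewrite mul0r expR0.
by rewrite sumr_const cardC1.
Qed.

End softmax.

Section deferral.
Context {d : measure_display} {X : measurableType d} {R : realType} (n : nat)
  (c : X -> 'I_n.+1 -> R)
  (c_meas : measurable_fun setT (fun z : X * 'I_n.+1 => c z.1 z.2))
  (c01 : forall x y, 0 <= c x y <= 1)
  (P : probability (X * 'I_n.+1)%type R).

Local Notation Psi := (fun t : R => 1 - t).
Implicit Types h : X -> 'I_n.+2 -> R.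

Definition act_loss (j : 'I_n.+2) (z : X * 'I_n.+1) : R :=
  (j != lab z.2)%:R * (j != defer n)%:R + c z.1 z.2 * (j == defer n)%:R.

Lemma act_loss01 j z : 0 <= act_loss j z <= 1.
Proof.
rewrite /act_loss; have /andP[c0 c1] := c01 z.1 z.2.
by case: (j == defer n); case: (j != lab z.2) => /=; apply/andP; split; lra.
Qed.

Lemma measurable_act_loss j : measurable_fun setT (act_loss j).
Proof.
apply: measurable_funD; apply: measurable_funM => //.
exact: measurableT_comp (measurable_fun_ord (fun y => (j != lab y)%:R : R))
  measurable_snd.
Qed.

Lemma act_lossE j x y : act_loss j (x, y) =
  1 - (j == lab y)%:R - (j == defer n)%:R + c x y * (j == defer n)%:R.
Proof.
rewrite /act_loss /=; case: (j =P lab y) => [->|_].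
  by rewrite (negbTE (lab_neq_defer y)) /=; ring.
by case: (j =P defer n) => _ /=; ring.
Qed.

Lemma L_RL2D_softmax h x y :
  L_RL2D Psi c h x y = \sum_j softmax (h x) j * act_loss j (x, y).
Proof.
pose p := softmax (h x).
rewrite (eq_bigr (fun j => p j - p j * (j == lab y)%:R - p j * (j == defer n)%:R
                           + c x y * (p j * (j == defer n)%:R))); last first.
  by move=> j _; rewrite act_lossE /p; ring.
rewrite big_split /= !sumrB -mulr_sumr !sum_mul_eq (sum_softmax _ ord0).
by rewrite /L_RL2D /p /softmax mulrDl; ring.
Qed.

Lemma H_all_measurable h : H_all h -> forall j, measurable_fun setT (h ^~ j).
Proof. by move=> Hh j; exact: measurable_fun_pair1 j Hh. Qed.

Lemma measurable_softmax h : H_all h -> forall j,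
  measurable_fun setT (fun x => softmax (h x) j).
Proof.
move=> /H_all_measurable mh j; under eq_fun do rewrite softmax_logsumexp.
have mZ : measurable_fun setT (fun x => \sum_k expR (h x k)).
  by apply: measurable_sum => k; exact: measurableT_comp (@measurable_expR R) (mh k).
exact: measurableT_comp (@measurable_expR R)
  (measurable_funB (mh j) (measurableT_comp (@measurable_ln R) mZ)).
Qed.

Lemma risk_L_def h : H_all h ->
  risk P (L_def c) h = (\int[P]_z act_loss (hpred h z.1) z)%:E.
Proof.
move=> Hh; apply: (integral_bounded_EFin P (fun z => act_loss (hpred h z.1) z)).
apply: bounded_measurable01 => [|z].
  apply: measurable_fun_select; first exact: measurable_act_loss.
  exact/measurable_hpred/H_all_measurable.
exact: act_loss01.
Qed.

Lemma bounded_measurable_softmax_risk h : H_all h ->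
  bounded_measurable (fun z => \sum_j softmax (h z.1) j * act_loss j z).
Proof.
move=> Hh; apply: (bounded_measurable_mixture (r := fun j x => softmax (h x) j)).
- exact: measurable_softmax.
- by move=> j x; exact: softmax_ge0.
- by move=> x; exact: sum_softmax ord0.
- exact: measurable_act_loss.
- exact: act_loss01.
Qed.

Lemma risk_L_RL2D h : H_all h ->
  risk P (L_RL2D Psi c) h = (\int[P]_z \sum_j softmax (h z.1) j * act_loss j z)%:E.
Proof.
move=> Hh; rewrite /risk -integral_bounded_EFin.
  by apply: eq_integral => -[x y] _; rewrite L_RL2D_softmax.
exact: bounded_measurable_softmax_risk.
Qed.

Definition onehot (g : X -> 'I_n.+2) (x : X) (j : 'I_n.+2) : R := (j == g x)%:R.

Lemma H_all_onehot g : measurable_fun setT g -> H_all (onehot g).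
Proof.
move=> mg.
apply: (measurable_fun_select (fun j (z : X * 'I_n.+2) => (z.2 == j)%:R : R)) => // j.
exact: measurableT_comp (measurable_fun_ord (fun i => (i == j)%:R : R)) measurable_snd.
Qed.

Lemma hpred_onehot g x : hpred (onehot g) x = g x.
Proof.
rewrite /hpred /onehot; case: arg_maxP => //= i _ /(_ (g x) isT).
by rewrite eqxx; case: eqP => // _; rewrite ler10.
Qed.

Lemma best_L_def_le_mixture (r : 'I_n.+2 -> X -> R) :
  (forall j, measurable_fun setT (r j)) -> (forall j x, 0 <= r j x) ->
  (forall x, \sum_j r j x = 1) ->
  (best_risk P (L_def c) <= (\int[P]_z \sum_j r j z.1 * act_loss j z)%:E)%E.
Proof.
move=> mr r0 r1; apply/lee_addgt0Pr => eps eps_gt0.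
have [g mg g_le] := derandomize P n.+1 act_loss r eps measurable_act_loss
  act_loss01 mr r0 r1 eps_gt0.
have Hg : H_all (onehot g) by exact: H_all_onehot.
apply: le_trans (ereal_inf_lbound _) _; first by exists (onehot g).
rewrite risk_L_def // -EFinD lee_fin.
by under eq_Rintegral do rewrite hpred_onehot.
Qed.

Lemma best_L_RL2D_le_risk_L_def h : H_all h ->
  (best_risk P (L_RL2D Psi c) <= risk P (L_def c) h)%E.
Proof.
move=> Hh; rewrite risk_L_def //; apply/lee_addgt0Pr => eps eps_gt0.
pose g := hpred h.
have mg : measurable_fun setT g by exact/measurable_hpred/H_all_measurable.
pose N : R := n.+1%:R.
pose M := N / eps.
have M_gt0 : 0 < M by rewrite divr_gt0 ?ltr0Sn.
pose hM x j := onehot g x j * ln M.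
have HM : H_all hM by have := measurable_funM (H_all_onehot _ mg) (measurable_cst (ln M)).
apply: le_trans (ereal_inf_lbound _) _; first by exists hM.
rewrite risk_L_RL2D // -EFinD lee_fin -[X in _ <= _ + X](Rintegral_prob_cst P).
have bg : bounded_measurable (fun z => act_loss (hpred h z.1) z).
  apply: bounded_measurable01 => [|z]; last exact: act_loss01.
  exact: measurable_fun_select measurable_act_loss mg.
rewrite -RintegralD_bounded //; last exact: bounded_measurable_cst.
apply: le_Rintegral_bounded => [||z].
- exact: bounded_measurable_softmax_risk.
- by apply: bounded_measurableD => //; exact: bounded_measurable_cst.
apply: le_trans (mixture_le_term _ _ (g z.1) _ _ _) _.
- exact: softmax_ge0.
- exact: sum_softmax ord0.
- by move=> j; exact: act_loss01.
rewrite lerD2l softmax_scaled_onehot // card_ord /= -/N.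
(* the mass left off [g x] is [N / (N / eps + N) = eps / (1 + eps)] *)
rewrite (_ : 1 - M / (M + N) = N / (M + N)); last first.
  by field; rewrite gt_eqF // addr_gt0 ?ltr0Sn.
rewrite ler_pdivrMr ?addr_gt0 ?ltr0Sn // mulrDr [eps * M]mulrC divfK ?gt_eqF //.
by rewrite lerDl mulr_ge0 // ltW.
Qed.

Lemma best_L_RL2D_le_best_L_def :
  (best_risk P (L_RL2D Psi c) <= best_risk P (L_def c))%E.
Proof.
by apply: le_ereal_inf_tmp => _ [h Hh <-]; exact: best_L_RL2D_le_risk_L_def.
Qed.

Lemma best_L_RL2D_ge0 : (0 <= best_risk P (L_RL2D Psi c))%E.
Proof.
apply: le_ereal_inf_tmp => _ [h Hh <-]; rewrite risk_L_RL2D // lee_fin.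
apply: Rintegral_ge0 => z _; apply: sumr_ge0 => j _.
by rewrite mulr_ge0 ?softmax_ge0 //; case/andP: (act_loss01 j z).
Qed.

Lemma best_L_def_fin_num : best_risk P (L_def c) \is a fin_num.
Proof.
have H0 : H_all (onehot (fun _ => ord0)) by apply: H_all_onehot; exact: measurable_cst.
rewrite ge0_fin_numE; last exact: le_trans best_L_RL2D_ge0 best_L_RL2D_le_best_L_def.
apply: le_lt_trans (ereal_inf_lbound _) _; first by exists (onehot (fun _ => ord0)).
by rewrite risk_L_def // ltry.
Qed.

Lemma best_L_RL2D_fin_num : best_risk P (L_RL2D Psi c) \is a fin_num.
Proof.
rewrite ge0_fin_numE; last exact: best_L_RL2D_ge0.
apply: le_lt_trans best_L_RL2D_le_best_L_def _.
by case/fin_numPlt/andP: best_L_def_fin_num.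
Qed.

Lemma best_L_def_le_excess h : H_all h ->
  (best_risk P (L_def c) <=
   ((n.+2%:R * \int[P]_z \sum_j softmax (h z.1) j * act_loss j z
     - \int[P]_z act_loss (hpred h z.1) z) / n.+1%:R)%:E)%E.
Proof.
move=> Hh; pose k := hpred h.
have mk : measurable_fun setT k by exact/measurable_hpred/H_all_measurable.
pose N : R := n.+1%:R.
have N_gt0 : 0 < N := ltr0Sn _ _.
(* [r] is a distribution: the predicted label has softmax mass >= 1/(n+2) *)
pose r j x := (n.+2%:R * softmax (h x) j - (j == k x)%:R) / N.
have mr j : measurable_fun setT (r j).
  apply: measurable_funM => //; apply: measurable_funB.
    by apply: measurable_funM => //; exact: measurable_softmax.
  exact: measurableT_comp (measurable_fun_ord (fun i => (j == i)%:R : R)) mk.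
have r0 j x : 0 <= r j x.
  rewrite /r; apply: divr_ge0; last exact: ltW.
  rewrite subr_ge0; case: eqP => [->|_] /=.
    by have := softmax_arg_max (h x) (k x) (hpred_ge h x); rewrite card_ord.
  by rewrite mulr_ge0 ?softmax_ge0.
have r1 x : \sum_j r j x = 1.
  rewrite /r -mulr_suml sumrB -mulr_sumr (sum_softmax _ ord0) mulr1.
  under eq_bigr do rewrite -[(_ == _)%:R]mul1r.
  by rewrite sum_mul_eq -natr1 addrK mulfV ?gt_eqF.
apply: le_trans (best_L_def_le_mixture r mr r0 r1) _; rewrite lee_fin.
have bF := bounded_measurable_softmax_risk h Hh.
have bG : bounded_measurable (fun z => act_loss (k z.1) z).
  apply: bounded_measurable01 => [|z]; last exact: act_loss01.
  exact: measurable_fun_select measurable_act_loss mk.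
have -> : \int[P]_z \sum_j r j z.1 * act_loss j z =
    \int[P]_z (n.+2%:R / N * \sum_j softmax (h z.1) j * act_loss j z
               + (- N^-1) * act_loss (k z.1) z).
  apply: eq_Rintegral => z _.
  rewrite (eq_bigr (fun j => n.+2%:R / N * (softmax (h z.1) j * act_loss j z)
                             + (- N^-1) * (act_loss j z * (j == k z.1)%:R))).
    by rewrite big_split /= -!mulr_sumr sum_mul_eq.
  by move=> j _; rewrite /r; ring.
rewrite RintegralD_bounded ?RintegralZl_bounded //.
- by rewrite le_eqVlt; apply/orP; left; apply/eqP; ring.
- exact: bounded_measurableM (bounded_measurable_cst _) bF.
- exact: bounded_measurableM (bounded_measurable_cst _) bG.
Qed.

Lemma excess_L_def_le h : H_all h ->
  (risk P (L_def c) h - best_risk P (L_def c) <=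
   n.+2%:R%:E * (risk P (L_RL2D Psi c) h - best_risk P (L_RL2D Psi c)))%E.
Proof.
move=> Hh; have := best_L_def_le_excess h Hh; have := best_L_RL2D_le_best_L_def.
rewrite risk_L_def // risk_L_RL2D // -(fineK best_L_def_fin_num).
rewrite -(fineK best_L_RL2D_fin_num) -!EFinB -EFinM !lee_fin.
rewrite ler_pdivlMr ?ltr0Sn // -!natr1.
have := ler0n R n.+1; nra.
Qed.

Lemma excess_L_def_ge0 h : H_all h ->
  (0 <= risk P (L_def c) h - best_risk P (L_def c))%E.
Proof.
move=> Hh; rewrite subre_ge0; last by rewrite risk_L_def.
by apply: ereal_inf_lbound; exists h.
Qed.

End deferral.

(* The number of labels is n.+1 (paper's n = n.+1), so the paper's
   constant n+1 is n.+2 here. *)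
Theorem corollary5 (d : measure_display) (X : measurableType d)
  (R : realType) (n : nat) (c : X -> 'I_n.+1 -> R)
  (c_meas : measurable_fun setT (fun z : X * 'I_n.+1 => c z.1 z.2))
  (c01 : forall x y, 0 <= c x y <= 1)
  (P : probability (X * 'I_n.+1)%type R) :
  let Psi := fun t : R => 1 - t in
  (forall h : X -> 'I_n.+2 -> R, H_all h ->
    (risk P (L_def c) h - best_risk P (L_def c) <=
       (n.+2)%:R%:E * (risk P (L_RL2D Psi c) h - best_risk P (L_RL2D Psi c)))%E)
  /\
  (forall hs : nat -> X -> 'I_n.+2 -> R, (forall k, H_all (hs k)) ->
    (fun k => (risk P (L_RL2D Psi c) (hs k) - best_risk P (L_RL2D Psi c))%E)
      @ \oo --> 0%E ->
    (fun k => (risk P (L_def c) (hs k) - best_risk P (L_def c))%E)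
      @ \oo --> 0%E).
Proof.
move=> Psi; split => [h Hh|hs Hhs cvg_RL2D]; first exact: excess_L_def_le.
apply: (@squeeze_cvge _ _ _ _ (cst 0%E) _
  (fun k => n.+2%:R%:E * (risk P (L_RL2D Psi c) (hs k) - best_risk P (L_RL2D Psi c)))%E).
- apply: nearW => k; rewrite excess_L_def_ge0 //=.
  exact: excess_L_def_le.
- exact: cvg_cst.
- by rewrite -(mule0 n.+2%:R%:E); apply: cvgeM => //; exact: cvg_cst.
Qed.
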